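(* Let $\eta>0$, $y>0$, $\tilde x>0$, set $k=\eta\tilde x$ and $\eta_c=\frac{1}{\tilde x y}$, and let $M(\Delta f)=\Delta f\left(1-2k(\Delta f+y)+k^2\Delta f(\Delta f+y)\right)$. The fixed points of $M$ are $0$, $-y$, $2/k$. The remaining six solutions of $M(M(\Delta f))=\Delta f$ are $$\Delta f=\frac{k(1-ky)\pm\sqrt{k^2(ky-1)(ky+3)}}{2k^2}$$ and four further roots whose expression involves $h=\sqrt{-7+ky(2+ky)}$, which are non-real when $ky<2\sqrt2-1$. In particular, the two points $\frac{k(1-ky)\pm\sqrt{k^2(ky-1)(ky+3)}}{2k^2}$ form a real period-two orbit of $M$ consisting of two distinct points if and only if $\eta>\eta_c$, and $M$ has no real period-two orbit when $\eta\le\eta_c$.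
   Context: $\tilde x=\|\bm x\|/\sqrt{n_{\mathrm{eff}}}$. The map $M$ is the restriction of the UV model's function-space gradient descent dynamics to the invariant EoS manifold $\lambda=2\tilde x(\Delta f+y)$, written in terms of the residual $\Delta f$. *)

From mathcomp Require Import all_boot all_order all_algebra.
From mathcomp Require Import all_classical all_reals.
Set Implicit Arguments. Unset Strict Implicit. Unset Printing Implicit Defensive.
Import Order.TTheory GRing.Theory Num.Theory.
Local Open Scope ring_scope.

Definition Mmap {R : realType} (k y d : R) : R :=
  d * (1 - 2 * k * (d + y) + k ^+ 2 * d * (d + y)).

Definition p2plus {R : realType} (k y : R) : R :=
  (k * (1 - k * y) + Num.sqrt (k ^+ 2 * (k * y - 1) * (k * y + 3))) / (2 * k ^+ 2).
Definition p2minus {R : realType} (k y : R) : R :=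
  (k * (1 - k * y) - Num.sqrt (k ^+ 2 * (k * y - 1) * (k * y + 3))) / (2 * k ^+ 2).

From mathcomp Require Import all_boot all_order all_algebra.
From mathcomp Require Import all_classical all_reals.
From mathcomp Require Import ring lra.
Set Implicit Arguments. Unset Strict Implicit. Unset Printing Implicit Defensive.
Import Order.TTheory GRing.Theory Num.Theory.
Local Open Scope ring_scope.

(** M(M d) - d factors as (M d - d) q(d) T(d).  The quadratic q vanishes
    exactly at p2plus and p2minus; on its zeros M d = (1 - ky)/k - d, and
    since the two points sum to (1 - ky)/k, M swaps them.  The quartic T is a
    square minus h^2/4 times a square, with h^2 = -7 + ky(2 + ky) as in the
    paper, so it has no real zero when h^2 < 0.  The discriminant
    k^2 (ky - 1)(ky + 3) of q is positive exactly when ky > 1, i.e. when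
    eta > eta_c; otherwise the two points coincide and no real orbit of period
    two exists. *)

Definition hsq {R : pzRingType} (c : R) : R := -7 + c * (2 + c).

Lemma hsq_lt0 (R : rcfType) (c : R) :
  0 <= c -> c < 2 * Num.sqrt 2 - 1 -> hsq c < 0.
Proof.
move=> c_ge0 c_lt; rewrite /hsq.
have sqrt2_sq : Num.sqrt 2 ^+ 2 = 2 :> R by rewrite sqr_sqrtr // ler0n.
have sqrt2_ge0 : 0 <= Num.sqrt 2 :> R by exact: sqrtr_ge0.
nra.
Qed.

Section EoSMap.
Variables (R : realType) (k y : R).
Implicit Types d : R.

Local Notation M := (Mmap k y).

Definition p2disc : R := k ^+ 2 * (k * y - 1) * (k * y + 3).

Definition period2_quad d : R := (k * d) ^+ 2 + (k * y - 1) * (k * d) + 1 - k * y.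

Definition period2_quartic d : R :=
  ((k * d) ^+ 2 + (k * y - 3) / 2 * (k * d) - (1 + k * y) / 2) ^+ 2
  - hsq (k * y) / 4 * (k * d - 1) ^+ 2.

Lemma Mmap_subid d : M d - d = k * d * (d + y) * (k * d - 2).
Proof. rewrite /Mmap; ring. Qed.

Lemma Mmap2_subid d :
  M (M d) - d = (M d - d) * period2_quad d * period2_quartic d.
Proof. rewrite /period2_quad /period2_quartic /hsq /Mmap; by field. Qed.

Lemma period2_quad_sq d :
  4 * k ^+ 2 * period2_quad d = (2 * k ^+ 2 * d - k * (1 - k * y)) ^+ 2 - p2disc.
Proof. rewrite /period2_quad /p2disc; ring. Qed.

Lemma period2_quartic_neq0 d : hsq (k * y) < 0 -> period2_quartic d != 0.
Proof.
move=> hsq_lt0; rewrite /period2_quartic.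
set A := (_ - _) ^+ 2; set B := k * d - 1.
have A_ge0 : 0 <= A by exact: sqr_ge0.
apply/eqP => quartic0.
have B0 : B = 0 by apply/eqP; rewrite -sqrf_eq0; nra.
move: quartic0 A_ge0; rewrite /A -/B B0 expr0n /=.
have -> : k * d = 1 by apply/eqP; rewrite -subr_eq0 -/B B0.
rewrite /hsq in hsq_lt0; nra.
Qed.

Lemma Mmap2_eqE d : hsq (k * y) < 0 ->
  (M (M d) == d) = (M d == d) || (period2_quad d == 0).
Proof.
move=> hsq_lt0.
rewrite -subr_eq0 Mmap2_subid !mulf_eq0 (negbTE (period2_quartic_neq0 d hsq_lt0)).
by rewrite orbF subr_eq0.
Qed.

Hypothesis k_neq0 : k != 0.

Lemma Mmap_fixE d : M d = d <-> [\/ d = 0, d = - y | d = 2 / k].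
Proof.
have twok : 2 / k * k = 2 by rewrite divfK.
have fixE : (M d == d) = [|| d == 0, d + y == 0 | k * d - 2 == 0].
  by rewrite -subr_eq0 Mmap_subid !mulf_eq0 (negbTE k_neq0) orbA.
split=> [/eqP | fix_d]; last by apply/eqP; rewrite fixE; case: fix_d => ->;
  rewrite ?addNr ?(mulrC k) ?twok ?subrr eqxx ?orbT.
rewrite fixE => /or3P[] /eqP d0.
- by constructor 1.
- by constructor 2; lra.
- by constructor 3; apply: (mulIf k_neq0); rewrite twok; lra.
Qed.

Lemma p2plus_center :
  2 * k ^+ 2 * p2plus k y - k * (1 - k * y) = Num.sqrt p2disc.
Proof. by rewrite /p2plus /p2disc; field. Qed.

Lemma p2minus_center :
  2 * k ^+ 2 * p2minus k y - k * (1 - k * y) = - Num.sqrt p2disc.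
Proof. by rewrite /p2minus /p2disc; field. Qed.

Lemma p2plus_add_p2minus : p2plus k y + p2minus k y = (1 - k * y) / k.
Proof. by rewrite /p2plus /p2minus; field. Qed.

Lemma p2plus_sub_p2minus : p2plus k y - p2minus k y = Num.sqrt p2disc / k ^+ 2.
Proof. by rewrite /p2plus /p2minus /p2disc; field. Qed.

Lemma period2_quad_eq0 d :
  period2_quad d = 0 <-> 0 <= p2disc /\ (d = p2plus k y \/ d = p2minus k y).
Proof.
have k4 : 4 * k ^+ 2 != 0 by rewrite mulf_neq0 ?expf_neq0 ?pnatr_eq0.
have center_inj d' : 2 * k ^+ 2 * d - k * (1 - k * y) =
    2 * k ^+ 2 * d' - k * (1 - k * y) -> d = d'.
  by move/addIr/mulfI; apply; rewrite mulf_neq0 ?expf_neq0 ?pnatr_eq0.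
set X := 2 * k ^+ 2 * d - k * (1 - k * y).
have quad0E : period2_quad d = 0 <-> X ^+ 2 = p2disc.
  split=> [quad0 | X_sq]; apply/eqP.
  - by rewrite -subr_eq0 -period2_quad_sq quad0 mulr0.
  - by rewrite -(mulrI_eq0 _ (lregP k4)) period2_quad_sq X_sq subrr.
rewrite quad0E; split=> [X_sq | [disc_ge0 [d_p2|d_p2]]]; rewrite /X ?d_p2.
- have disc_ge0 : 0 <= p2disc by rewrite -X_sq sqr_ge0.
  split=> //; have : X ^+ 2 == Num.sqrt p2disc ^+ 2 by rewrite sqr_sqrtr // X_sq.
  rewrite eqf_sqr => /orP[] /eqP X_sqrt; [left|right]; apply: center_inj.
  + by rewrite p2plus_center -X_sqrt.
  + by rewrite p2minus_center -X_sqrt.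
- by rewrite p2plus_center sqr_sqrtr.
- by rewrite p2minus_center sqrrN sqr_sqrtr.
Qed.

Lemma p2plus_eq_p2minus : p2plus k y = p2minus k y <-> p2disc <= 0.
Proof.
rewrite -sqrtr_eq0; split=> [eq_p2 | /eqP sqrt0].
- move: p2plus_sub_p2minus; rewrite eq_p2 subrr => /esym/eqP.
  by rewrite mulf_eq0 invr_eq0 expf_eq0 (negbTE k_neq0) andbF orbF.
- by apply/eqP; rewrite -subr_eq0 p2plus_sub_p2minus sqrt0 mul0r.
Qed.

Lemma p2disc_gt0E : 0 <= k * y -> (0 < p2disc) = (1 < k * y).
Proof.
move=> ky_ge0; have k2_gt0 : 0 < k ^+ 2 by rewrite exprn_even_gt0.
by rewrite /p2disc -mulrA pmulr_rgt0 // pmulr_lgt0 ?subr_gt0 //; lra.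
Qed.

Lemma Mmap_quad0 d : period2_quad d = 0 -> M d = (1 - k * y) / k - d.
Proof.
have Mq : M d = ((k * d - 1) * period2_quad d + 1 - k * y) / k - d.
  by rewrite /Mmap /period2_quad; field.
by move=> quad0; rewrite Mq quad0 mulr0 add0r.
Qed.

Lemma Mmap_p2swap : 0 <= p2disc ->
  M (p2plus k y) = p2minus k y /\ M (p2minus k y) = p2plus k y.
Proof.
move=> disc_ge0; rewrite !Mmap_quad0 -?p2plus_add_p2minus.
- by split; ring.
- by apply/period2_quad_eq0; split=> //; right.
- by apply/period2_quad_eq0; split=> //; left.
Qed.

Lemma Mmap2_p2 : 0 <= p2disc ->
  M (M (p2plus k y)) = p2plus k y /\ M (M (p2minus k y)) = p2minus k y.
Proof. by case/Mmap_p2swap => M_p M_m; rewrite M_p M_m. Qed.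

Lemma Mmap2_fix_cases d : hsq (k * y) < 0 -> M (M d) = d ->
  M d = d \/ 0 <= p2disc /\ (d = p2plus k y \/ d = p2minus k y).
Proof.
move=> hsq_lt0 /eqP; rewrite Mmap2_eqE // => /orP[] /eqP fix_d.
- by left.
- by right; apply/period2_quad_eq0.
Qed.

Lemma period2_orbit_p2disc_gt0 a b : hsq (k * y) < 0 ->
  a <> b -> M a = b -> M b = a -> 0 < p2disc.
Proof.
move=> hsq_lt0 neq_ab Ma Mb.
have on_p2 z : M z <> z -> M (M z) = z ->
    0 <= p2disc /\ (z = p2plus k y \/ z = p2minus k y).
  by move=> nfix /(Mmap2_fix_cases hsq_lt0) [].
have [disc_ge0 a_p2] : 0 <= p2disc /\ (a = p2plus k y \/ a = p2minus k y).
  by apply: on_p2; rewrite ?Ma ?Mb // => /esym.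
have [_ b_p2] : 0 <= p2disc /\ (b = p2plus k y \/ b = p2minus k y).
  by apply: on_p2; rewrite ?Mb ?Ma.
rewrite lt_def disc_ge0 andbT; apply/eqP => disc0; apply: neq_ab.
have p2_eq : p2plus k y = p2minus k y by apply/p2plus_eq_p2minus; rewrite disc0.
by case: a_p2 b_p2 => -> [] ->.
Qed.

End EoSMap.

Theorem mainTheorem9 (R : realType) (eta y xt : R) :
  0 < eta -> 0 < y -> 0 < xt ->
  let k := eta * xt in
  let eta_c := 1 / (xt * y) in
  let M := Mmap k y in
  (forall d : R, M d = d <-> [\/ d = 0, d = - y | d = 2 / k]) /\
  (0 <= k ^+ 2 * (k * y - 1) * (k * y + 3) ->
     M (M (p2plus k y)) = p2plus k y /\ M (M (p2minus k y)) = p2minus k y) /\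
  (k * y < 2 * Num.sqrt 2 - 1 ->
     forall d : R, M (M d) = d ->
       [\/ d = 0, d = - y, d = 2 / k | d = p2plus k y \/ d = p2minus k y]) /\
  ((0 <= k ^+ 2 * (k * y - 1) * (k * y + 3) /\ p2plus k y <> p2minus k y /\
    M (p2plus k y) = p2minus k y /\ M (p2minus k y) = p2plus k y)
     <-> eta_c < eta) /\
  (eta <= eta_c -> ~ (exists a b : R, a <> b /\ M a = b /\ M b = a)).
Proof.
move=> eta_gt0 y_gt0 xt_gt0 k eta_c M.
have k_gt0 : 0 < k by rewrite mulr_gt0.
have k_neq0 : k != 0 by rewrite gt_eqF.
have ky_ge0 : 0 <= k * y by rewrite mulr_ge0 // ltW.
have eta_cE : (eta_c < eta) = (1 < k * y).
  by rewrite /eta_c /k ltr_pdivrMr ?mulr_gt0 // mulrA.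
have disc_gt0E := p2disc_gt0E k_neq0 ky_ge0.
split; first exact: Mmap_fixE.
split; first exact: Mmap2_p2.
split.
  move=> /(hsq_lt0 ky_ge0) hsq_lt0 d.
  case/(Mmap2_fix_cases k_neq0 hsq_lt0) => [/(Mmap_fixE y k_neq0) | [_ p2]].
  - by case=> ->; [constructor 1 | constructor 2 | constructor 3].
  - by constructor 4.
split.
  rewrite eta_cE -disc_gt0E; split=> [[_ [neq_p2 _]] | disc_gt0].
  - by rewrite ltNge; apply/negP => /(p2plus_eq_p2minus y k_neq0).
  - have disc_ge0 := ltW disc_gt0.
    split=> //; split; last exact: Mmap_p2swap.
    by move/(p2plus_eq_p2minus y k_neq0); rewrite leNgt disc_gt0.
move=> eta_le [a [b [neq_ab [Ma Mb]]]].
have ky_le1 : k * y <= 1 by rewrite leNgt -eta_cE -leNgt.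
have hsq_lt0 : hsq (k * y) < 0 by rewrite /hsq; nra.
have := period2_orbit_p2disc_gt0 k_neq0 hsq_lt0 neq_ab Ma Mb.
by rewrite disc_gt0E ltNge ky_le1.
Qed.
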